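(* Let $\mathcal L$ be a finite distributive lattice and $\mathcal I$ a poset ideal (respectively a poset coideal) of $\mathcal L$. Then the minimal free resolution of $H_{\mathcal I}$ is linear.
   Context: Let $P$ be the set of join-irreducible elements of $\mathcal L$ (elements with exactly one lower neighbor), with the induced order; for $p\in\mathcal L$ put $\ell(p)=\{q\in P:q\le p\}$. Let $K$ be a field and $S=K[x_p,y_p: p\in P]$ with all variables of degree 1. For $q\in\mathcal L$ put $u_q=\prod_{p\in\ell(q)}x_p\prod_{p\in P\setminus\ell(q)}y_p$, and for $\mathcal S\subseteq\mathcal L$ let $H_{\mathcal S}$ be the ideal generated by $\{u_q:q\in\mathcal S\}$. Poset ideals are closed downward, poset coideals upward. A minimal graded free resolution of an ideal is linear if all minimal generators have a common degree $d$ and the $i$-th free module is generated in degree $d+i$ for all $i$. *)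

From HB Require Import structures.
From mathcomp Require Import all_boot all_order all_algebra.
From mathcomp Require Import mpoly.
Set Implicit Arguments. Unset Strict Implicit. Unset Printing Implicit Defensive.
Import Order.TTheory GRing.Theory.
Local Open Scope ring_scope.

Section Hibi.
Context {disp : Order.disp_t} (L : finTBDistrLatticeType disp).

Definition lower_nb (q p : L) : bool :=
  (q < p)%O && [forall r : L, ~~ ((q < r)%O && (r < p)%O)].

Definition join_irr (p : L) : bool := #|[set q : L | lower_nb q p]| == 1%N.

Definition JI : finType := {p : L | join_irr p}.

Definition nJI : nat := #|{: JI}|.

(** the ring S = K[x_p, y_p : p in P]: variables indexed by 'I_(nJI + nJI),
    the first nJI are the x_p, the last nJI are the y_p. *)
Definition Sring (K : fieldType) := {mpoly K[nJI + nJI]}.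

Definition xv (K : fieldType) (p : JI) : Sring K := 'X_(lshift nJI (enum_rank p)).
Definition yv (K : fieldType) (p : JI) : Sring K := 'X_(rshift nJI (enum_rank p)).

Definition u_mon (K : fieldType) (q : L) : Sring K :=
  (\prod_(p : JI | (val p <= q)%O) xv K p) *
  (\prod_(p : JI | ~~ (val p <= q)%O) yv K p).

Definition in_H (K : fieldType) (S : {set L}) (f : Sring K) : Prop :=
  exists c : L -> Sring K, f = \sum_(q in S) c q * u_mon K q.

Definition poset_ideal (I : {set L}) : Prop :=
  forall x y : L, (y <= x)%O -> x \in I -> y \in I.
Definition poset_coideal (I : {set L}) : Prop :=
  forall x y : L, (x <= y)%O -> x \in I -> y \in I.

End Hibi.
Arguments in_H {disp L} K S f.
Arguments u_mon {disp L} K q.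

Section Resolutions.
Context (K : fieldType) (n : nat).
Local Notation S := {mpoly K[n]}.

Definition homog_of (e : nat) (f : S) : bool := f \is ishomog1 e (@mdeg n).

(** A graded free resolution of the ideal J (given as a membership predicate)
      ... -> F_2 --d 1--> F_1 --d 0--> F_0 --eps--> J -> 0
    with F_i = (+)_{k < b i} S(-a i k), elements of F_i being row vectors
    'rV_(b i) and maps acting by right multiplication.  The sequence is
    indexed by all naturals (finite resolutions having b i = 0 eventually). *)
Record graded_free_res (J : S -> Prop) := GFR {
  gb : nat -> nat;
  ga : forall i, 'I_(gb i) -> nat;
  geps : 'M[S]_(gb 0, 1);
  gd : forall i, 'M[S]_(gb i.+1, gb i);
  geps_homog : forall k, homog_of (ga k) (geps k ord0);
  gd_homog : forall i k l, gd i k l = 0 \/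
     ((ga l <= ga k)%N /\ homog_of (ga k - ga l) (gd i k l));
  geps_onto : forall f, J f <-> exists v : 'rV[S]_(gb 0), f = (v *m geps) ord0 ord0;
  gexact0 : forall v : 'rV[S]_(gb 0),
     v *m geps = 0 <-> exists w : 'rV[S]_(gb 1), v = w *m gd 0;
  gexactS : forall i (v : 'rV[S]_(gb i.+1)),
     v *m gd i = 0 <-> exists w : 'rV[S]_(gb i.+2), v = w *m gd i.+1
}.

Definition minimal_res J (F : graded_free_res J) : Prop :=
  forall i k l, (gd F i k l)@_0%MM = 0.

Definition linear_res J (F : graded_free_res J) : Prop :=
  exists d : nat, forall i (k : 'I_(gb F i)), ga k = (d + i)%N.

(** The minimal graded free resolution of J is linear (minimal graded free
    resolutions being unique up to isomorphism, this is the existence of a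
    linear one). *)
Definition has_linear_min_res (J : S -> Prop) : Prop :=
  exists F : graded_free_res J, minimal_res F /\ linear_res F.

End Resolutions.

(* Identify q in L with the set ell(q) of join-irreducibles below it, so that
   u_q = prod_(p in A) x_p * prod_(p notin A) y_p for A = ell(q).  The family F of
   all ell(q) is closed under intersection, and any proper inclusion C < A in F can
   be shortened by removing a single element t of A \ C with A \ t in F; complements
   of the ell(q), with x and y swapped, do the same for coideals.  For such F and a
   down-closed I in F, the ideal (u_A : A in I) has linear quotients, and an explicit
   linear resolution is the iterated mapping cone of Koszul complexes: its basis
   consists of pairs (A, T) with A in I and T a set of removable elements of A, in
   homological degree |T|, with
     d(A, T) = sum_(t in T) +-(y_t (A, T \ t) - x_t (A \ t, T \ t)).
   All entries are linear forms, so the resolution is minimal and linear.  It is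
   exact by induction on I: peeling off a maximal A leaves the cells over A, which
   form the Koszul complex of the variables y_t (t removable from A), exact in
   positive degrees, while in degree 0 the colon ideal (u_B : B in I, B <> A) : u_A
   is generated by those same y_t. *)

From HB Require Import structures.
From mathcomp Require Import all_boot all_order all_algebra.
From mathcomp Require Import mpoly ring.

Set Implicit Arguments. Unset Strict Implicit. Unset Printing Implicit Defensive.
Import Order.TTheory GRing.Theory.
Local Open Scope ring_scope.

Local Notation erank t := (nat_of_ord (enum_rank t)).

Section KoszulSign.
Variables (R : comPzRingType) (P : finType).
Implicit Types (s t : P) (T : {set P}).

Definition ksign t T : R := (-1) ^+ #|[set s in T | (erank s < erank t)%N]|.

Lemma ksign_set1 t : ksign t [set t] = 1.
Proof.
rewrite /ksign (_ : [set s in _ | _] = set0) ?cards0 //.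
by apply/setP => s; rewrite !inE; case: eqP => // ->; rewrite ltnn.
Qed.

Lemma ksignD1 s t T : s \in T -> t \in T -> s != t ->
  ksign t T * ksign s (T :\ t) = - (ksign s T * ksign t (T :\ s)).
Proof.
have cardD1 (r q : P) (Q : {set P}) : r \in Q -> #|[set p in Q | (erank p < erank q)%N]| =
    ((erank r < erank q) + #|[set p in Q :\ r | (erank p < erank q)%N]|)%N.
  move=> rQ; rewrite (cardsD1 r) !inE rQ; congr (_ + _)%N.
  by apply: eq_card => p; rewrite !inE andbA.
wlog lt_st : s t / (erank s < erank t)%N.
  move=> hw sT tT nst.
  case: (ltngtP (erank s) (erank t)) => [lt_st|lt_ts|/ord_inj/enum_rank_inj st].
  - exact: hw.
  - by rewrite (hw t s) ?opprK // eq_sym.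
  - by rewrite st eqxx in nst.
move=> sT tT _; rewrite /ksign (cardD1 s t) // (cardD1 t s T) // lt_st.
by rewrite ltnNge (ltnW lt_st) /= add0n add1n exprS mulN1r mulNr mulrC.
Qed.

Lemma sum_setD1_antisym T (G : P -> P -> R) :
  (forall s t, s \in T -> t \in T -> s != t -> G s t = - G t s) ->
  \sum_(t in T) \sum_(s in T :\ t) G t s = 0.
Proof.
move=> G_anti.
have splitD1 t : \sum_(s in T :\ t) G t s =
    \sum_(s in T | (erank s < erank t)%N) G t s +
    \sum_(s in T | (erank t < erank s)%N) G t s.
  rewrite (bigID (fun s => (erank s < erank t)%N)) /=; congr (_ + _);
    apply: eq_bigl => s; rewrite !inE; case: (eqVneq s t) => [->|nst];
    rewrite ?ltnn ?andbF //.
  by rewrite -leqNgt ltn_neqAle (inj_eq (@ord_inj _)) (inj_eq enum_rank_inj) eq_sym nst.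
rewrite (eq_bigr _ (fun t _ => splitD1 t)) big_split /=.
rewrite [X in _ + X](exchange_big_dep (mem T)) /=; last by move=> t s _ /andP[].
rewrite -big_split big1 // => t tT; rewrite tT /= -big_split big1 // => s /andP[sT lt_st].
by rewrite G_anti /= ?addNr //; apply: contraTneq lt_st => ->; rewrite ltnn.
Qed.

End KoszulSign.
Arguments ksign {R P}.

Section Koszul.
Variables (R : comPzRingType) (P : finType) (y : P -> R).
Implicit Types (M T : {set P}) (z w : {set P} -> R).

Definition koszul_bd T T' : R :=
  \sum_(t in T) ksign t T * (if T' == T :\ t then y t else 0).

Definition kdiff z T' : R := \sum_T z T * koszul_bd T T'.

Lemma kdiffE z T' :
  kdiff z T' = \sum_(t | t \notin T') ksign t (t |: T') * (y t * z (t |: T')).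
Proof.
rewrite /kdiff /koszul_bd; under eq_bigr do rewrite mulr_sumr big_mkcond /=.
rewrite exchange_big [RHS]big_mkcond /=; apply: eq_bigr => t _.
transitivity (\sum_T (if T == t |: T' then
    (if t \notin T' then ksign t T * (y t * z T) else 0) else 0)).
  apply: eq_bigr => T _.
  case tT: (t \in T); last by case: eqP => // eT; rewrite eT setU11 in tT.
  case: (eqVneq T' (T :\ t)) => [->|ne].
    by rewrite setD1K // eqxx setD11 /=; ring.
  rewrite !mulr0; case: eqP => // eT; case: ifP => // tT'.
  by move: ne; rewrite eT setU1K ?eqxx.
by rewrite -big_mkcond big_pred1_eq.
Qed.

Lemma kdiff_set0 z : kdiff z set0 = \sum_t y t * z [set t].
Proof.
rewrite kdiffE; apply: eq_big => [t|t _]; first by rewrite inE.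
by rewrite setU0 ksign_set1 mul1r.
Qed.

Lemma kdiffD z w T' : kdiff (fun T => z T + w T) T' = kdiff z T' + kdiff w T'.
Proof. by rewrite /kdiff -big_split; apply: eq_bigr => T _; rewrite mulrDl. Qed.

Lemma kdiffBM z w (a : R) T' :
  kdiff (fun T => z T - a * w T) T' = kdiff z T' - a * kdiff w T'.
Proof.
by rewrite /kdiff mulr_sumr -sumrB; apply: eq_bigr => T _; rewrite mulrBl mulrA.
Qed.

Definition kchain M k z := forall T, ~~ ((T \subset M) && (#|T| == k)) -> z T = 0.

Definition koszul_exact_at M k := forall z, kchain M k.+1 z ->
  (forall T', T' \subset M -> #|T'| = k -> kdiff z T' = 0) ->
  exists2 w, kchain M k.+2 w & forall T, T \subset M -> #|T| = k.+1 -> z T = kdiff w T.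

Definition in_yideal M (b : R) := exists c : P -> R, b = \sum_(t in M) c t * y t.

Definition yregular := forall M m b, m \notin M -> in_yideal M (y m * b) -> in_yideal M b.

Definition singleton_chain M (c : P -> R) T : R :=
  \sum_(t in M) (if T == [set t] then c t else 0).

Lemma singleton_chainP M c : kchain M 1 (singleton_chain M c).
Proof.
move=> T nT; apply: big1 => t tM; case: eqP => // eT.
by move: nT; rewrite eT sub1set tM cards1.
Qed.

Lemma kdiff_singleton_chain M c :
  kdiff (singleton_chain M c) set0 = \sum_(t in M) c t * y t.
Proof.
rewrite kdiff_set0 [RHS]big_mkcond /=; apply: eq_bigr => t _.
rewrite /singleton_chain (eq_bigr (fun s => if s == t then c s else 0)); last first.
  by move=> s _; rewrite (inj_eq set1_inj) eq_sym.
case: ifP => tM; last first.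
  by rewrite big1 ?mulr0 // => s sM; case: eqP => // st; rewrite -st sM in tM.
by rewrite (bigD1 t) //= eqxx big1 ?addr0 1?mulrC // => s /andP[_ /negbTE ->].
Qed.

Section KoszulStep.
Variables (M : {set P}) (m : P).
Hypotheses (mM : m \in M) (m_max : forall t, t \in M -> (erank t <= erank m)%N).
Hypothesis yreg : yregular.
Local Notation M' := (M :\ m).
Hypothesis IH : forall k, koszul_exact_at M' k.

Lemma notin_subD1 T : T \subset M' -> m \notin T.
Proof. by move=> sub; apply: contraTN isT => /(subsetP sub); rewrite setD11. Qed.

Lemma ksign_setU1_max T : T \subset M' -> ksign m (m |: T) = (-1) ^+ #|T| :> R.
Proof.
move=> sub; rewrite /ksign; congr (_ ^+ _); apply: eq_card => s.
rewrite !inE; case: (eqVneq s m) => [->|nsm] /=.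
  by rewrite ltnn (negbTE (notin_subD1 sub)).
case sT: (s \in T) => //=.
rewrite ltn_neqAle (inj_eq (@ord_inj _)) (inj_eq enum_rank_inj) nsm m_max //.
by have := subsetP sub s sT; rewrite inE => /andP[].
Qed.

Lemma ksign_setU1 t T : t \in M -> ksign t (m |: T) = ksign t T :> R.
Proof.
move=> tM; rewrite /ksign; congr (_ ^+ _); apply: eq_card => s.
rewrite !inE; case: (eqVneq s m) => [->|] //=.
by rewrite ltnNge m_max // andbF; case: (m \in T).
Qed.

Lemma kdiff_shift z w T0 : T0 \subset M' ->
  (forall t, t \notin M -> w (t |: T0) = 0) -> w (m |: T0) = 0 ->
  (forall t, t != m -> t \notin T0 -> z (t |: (m |: T0)) = w (t |: T0)) ->
  kdiff z (m |: T0) = kdiff w T0.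
Proof.
move=> sub w_out wm zw; have mT0 := notin_subD1 sub.
rewrite !kdiffE [RHS](bigD1 m) //= wm !mulr0 add0r.
apply: eq_big => [t|t]; first by rewrite !inE negb_or andbC.
rewrite !inE negb_or => /andP[ntm tT0]; rewrite zw //; case tM: (t \in M).
  by rewrite setUCA ksign_setU1.
by rewrite w_out ?tM // !mulr0.
Qed.

Definition cone w T : R := if m \in T then w (T :\ m) else 0.

Lemma cone_chain j w : kchain M' j w -> kchain M j.+1 (cone w).
Proof.
move=> w_chain T; rewrite /cone; case: ifP => // mT nT; apply: w_chain.
apply: contra nT => /andP[sub /eqP cT]; rewrite (cardsD1 m) mT cT eqxx andbT.
by rewrite -(setD1K mT) subUset sub1set mM (subset_trans sub) ?subD1set.
Qed.

Lemma kdiff_cone_top j w T0 : kchain M' j w -> T0 \subset M' ->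
  kdiff (cone w) (m |: T0) = kdiff w T0.
Proof.
move=> w_chain sub; have mT0 := notin_subD1 sub.
have w_out T : ~~ (T \subset M') -> w T = 0.
  by move=> nT; apply: w_chain; rewrite negb_and nT.
apply: kdiff_shift => //.
- move=> t tM; apply: w_out; apply: contra tM => /subsetP subM.
  by have := subM t; rewrite !inE eqxx => /(_ isT) /andP[].
- apply: w_out; apply: contra (notin_subD1 (subxx M')) => /subsetP; apply.
  exact: setU11.
- move=> t ntm tT0; rewrite /cone !inE eqxx orbT; congr w.
  apply/setP => s; rewrite !inE; case: (eqVneq s m) => [->|] //=.
  by rewrite eq_sym (negbTE ntm) (negbTE mT0).
Qed.

Lemma kdiff_cone_base w T' : T' \subset M' ->
  kdiff (cone w) T' = (-1) ^+ #|T'| * (y m * w T').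
Proof.
move=> sub; have mT' := notin_subD1 sub.
rewrite kdiffE (bigD1 m) //= big1 ?addr0.
  by rewrite ksign_setU1_max // /cone setU11 setU1K.
move=> t /andP[_ ntm]; rewrite /cone in_setU1 eq_sym (negbTE ntm) (negbTE mT').
by rewrite !mulr0.
Qed.

Variables (k : nat) (z : {set P} -> R).
Hypotheses (z_chain : kchain M k.+1 z)
           (z_cycle : forall T', T' \subset M -> #|T'| = k -> kdiff z T' = 0).

Let b T := if m \in T then 0 else z (m |: T).
Let z0 T := if m \in T then 0 else z T.

Lemma b_chain : kchain M' k b.
Proof.
move=> T; rewrite /b; case: ifP => // mT nT; apply: z_chain; apply: contra nT.
case/andP => sub /eqP cT; rewrite subsetD1 mT (subset_trans (subsetUr _ _) sub) /=.
by rewrite -eqSS -cT cardsU1 mT.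
Qed.

Lemma z0_chain : kchain M' k.+1 z0.
Proof.
move=> T; rewrite /z0; case: ifP => // mT nT; apply: z_chain; apply: contra nT.
by case/andP => sub ->; rewrite subsetD1 sub mT.
Qed.

Lemma kdiff_split T' : T' \subset M' -> #|T'| = k ->
  kdiff z T' = kdiff z0 T' + (-1) ^+ k * (y m * b T').
Proof.
move=> sub cT'; have mT' := notin_subD1 sub.
rewrite !kdiffE (bigD1 m) //= [X in _ = X + _](bigD1 m) //=.
rewrite /z0 setU11 !mulr0 add0r ksign_setU1_max // cT' /b (negbTE mT') addrC.
congr (_ + _); apply: eq_bigr => t /andP[_ ntm].
by rewrite in_setU1 eq_sym (negbTE ntm) (negbTE mT').
Qed.

(* For [k > 0], [b] is a cycle on [M']; for [k = 0] the cycle condition only puts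
   [y m * b set0] in the ideal of [M'], and regularity of [y m] is needed. *)
Lemma b_boundary : exists2 cc, kchain M' k.+1 cc &
  forall T', T' \subset M' -> #|T'| = k -> b T' = kdiff cc T'.
Proof.
case ek: k => [|k'].
  have [c hc] : in_yideal M' (b set0).
    apply: (yreg (m := m)); rewrite ?setD11 //; exists (fun t => - z0 [set t]).
    move: (kdiff_split (sub0set _)); rewrite cards0 ek z_cycle ?sub0set ?cards0 //.
    rewrite expr0 mul1r kdiff_set0 => /(_ erefl) /eqP.
    rewrite eq_sym addrC addr_eq0 => /eqP ->; rewrite -sumrN [RHS]big_mkcond /=.
    apply: eq_bigr => t _; case: ifP => tM'; first by rewrite mulNr mulrC.
    by rewrite z0_chain ?mulr0 ?oppr0 // sub1set tM' cards1 ek.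
  exists (singleton_chain M' c); first exact: singleton_chainP.
  by move=> T' _ /cards0_eq ->; rewrite kdiff_singleton_chain.
apply: IH; first by rewrite -ek; exact: b_chain.
move=> T' sub cT'; have mT' := notin_subD1 sub.
rewrite -(kdiff_shift (z := z)) //.
- apply: z_cycle; last by rewrite cardsU1 mT' cT' ek.
  by rewrite subUset sub1set mM (subset_trans sub) ?subD1set.
- move=> t tM; rewrite /b; case: ifP => // _; apply: z_chain.
  by apply: contra tM => /andP[/subsetP subM _]; apply: subM; rewrite !inE eqxx orbT.
- by rewrite /b setU11.
- by move=> t ntm tT'; rewrite /b in_setU1 eq_sym (negbTE ntm) (negbTE mT') setUCA.
Qed.

Lemma koszul_step : exists2 w, kchain M k.+2 w &
  forall T, T \subset M -> #|T| = k.+1 -> z T = kdiff w T.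
Proof.
have [cc cc_chain b_cc] := b_boundary.
pose z2 T := z0 T - (-1) ^+ k.+1 * y m * cc T.
have z2_chain : kchain M' k.+1 z2.
  by move=> T nT; rewrite /z2 z0_chain // cc_chain // mulr0 subr0.
have z2_cycle T' : T' \subset M' -> #|T'| = k -> kdiff z2 T' = 0.
  move=> sub cT'; rewrite kdiffBM -b_cc //.
  move: (kdiff_split sub cT'); rewrite z_cycle ?(subset_trans sub) ?subD1set //.
  by move=> /eqP; rewrite eq_sym addr_eq0 => /eqP ->; rewrite exprS; ring.
have [e e_chain z2_e] := IH z2_chain z2_cycle.
exists (fun T => cone cc T + e T).
  move=> T nT; rewrite (cone_chain cc_chain) // e_chain ?addr0 //.
  by apply: contra nT => /andP[sub ->]; rewrite (subset_trans sub) ?subD1set.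
move=> T sub cT; rewrite kdiffD.
case mT: (m \in T); last first.
  have subT : T \subset M' by rewrite subsetD1 sub mT.
  by rewrite kdiff_cone_base // -z2_e // /z2 /z0 mT cT; ring.
have subT : T :\ m \subset M' by apply: setSD.
rewrite -(setD1K mT) (kdiff_cone_top cc_chain) // -b_cc //; last first.
  by move: cT; rewrite (cardsD1 m) mT => -[].
rewrite /b setD11 kdiffE big1 ?addr0 // => t _.
rewrite e_chain ?mulr0 //; apply: contra (notin_subD1 (subxx M')).
by move=> /andP[/subsetP subM _]; apply: subM; rewrite !inE eqxx orbT.
Qed.

End KoszulStep.

Lemma koszul_exact : yregular -> forall M k, koszul_exact_at M k.
Proof.
move=> yreg M; have [n] := ubnP #|M|; elim: n M => // n IHn M ltMn k.
have [-> z _ _|[m0 m0M]] := set_0Vmem M.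
  by exists (fun=> 0) => // T; rewrite subset0 => /eqP ->; rewrite cards0.
case: (@arg_maxnP P m0 (mem M) (fun t => erank t) m0M) => m /= mM m_max z.
apply: (koszul_step mM) => // j; apply: IHn.
by move: ltMn; rewrite (cardsD1 m) mM add1n ltnS.
Qed.

End Koszul.

Definition setI_closed (P : finType) (F : {set {set P}}) :=
  forall A B, A \in F -> B \in F -> A :&: B \in F.

Definition exchange (P : finType) (F : {set {set P}}) := forall A C,
  A \in F -> C \in F -> C \proper A -> exists2 t, t \in A :\: C & A :\ t \in F.

Section CellComplex.
Variables (R : comPzRingType) (P : finType) (x y : P -> R).

Definition cell := ({set P} * {set P})%type.
Implicit Types (c : cell) (v w : cell -> R) (z : {set P} -> R) (A B T : {set P}).

Lemma sum_delta_mul (a : cell) (g : R) (f : cell -> R) :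
  \sum_c (if c == a then g else 0) * f c = g * f a.
Proof. by rewrite (bigD1 a) //= eqxx big1 ?addr0 // => c /negbTE ->; rewrite mul0r. Qed.

Lemma sum_cell (f : cell -> R) : \sum_c f c = \sum_A \sum_T f (A, T).
Proof. by rewrite pair_bigA; apply: eq_bigr => -[]. Qed.

(* A cell [(A, T)] is the basis element of homological degree [#|T|] over the
   generator [u A]; [cell_bd c c'] is the coefficient of [c'] in the boundary of [c]. *)
Definition cell_bd c c' : R := \sum_(t in c.2) ksign t c.2 *
  ((if c' == (c.1, c.2 :\ t) then y t else 0) -
   (if c' == (c.1 :\ t, c.2 :\ t) then x t else 0)).

Definition cdiff v c' : R := \sum_c v c * cell_bd c c'.

Lemma sum_cell_bd c (f : cell -> R) :
  \sum_c' cell_bd c c' * f c' = \sum_(t in c.2) ksign t c.2 *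
    (y t * f (c.1, c.2 :\ t) - x t * f (c.1 :\ t, c.2 :\ t)).
Proof.
rewrite /cell_bd; under eq_bigr do rewrite mulr_suml.
rewrite exchange_big; apply: eq_bigr => t _.
under eq_bigr do rewrite -mulrA mulrBl.
by rewrite -mulr_sumr sumrB !sum_delta_mul.
Qed.

Lemma cell_bd_bd c c'' : \sum_c' cell_bd c c' * cell_bd c' c'' = 0.
Proof.
rewrite sum_cell_bd /=.
pose G t s := y t * ((if c'' == (c.1, c.2 :\ t :\ s) then y s else 0)
                    - (if c'' == (c.1 :\ s, c.2 :\ t :\ s) then x s else 0))
            - x t * ((if c'' == (c.1 :\ t, c.2 :\ t :\ s) then y s else 0)
                    - (if c'' == (c.1 :\ t :\ s, c.2 :\ t :\ s) then x s else 0)).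
transitivity (\sum_(t in c.2) \sum_(s in c.2 :\ t)
                 ksign t c.2 * ksign s (c.2 :\ t) * G t s).
  apply: eq_bigr => t _; rewrite /cell_bd /= !mulr_sumr -sumrB mulr_sumr.
  by apply: eq_bigr => s _; rewrite /G; ring.
apply: sum_setD1_antisym => s t sT tT nst.
have setD1C (A : {set P}) a b : A :\ a :\ b = A :\ b :\ a.
  by apply/setP => r; rewrite !inE !andbA [(r != b) && _]andbC.
rewrite [in RHS]ksignD1 // mulNr opprK; congr (_ * _).
by rewrite /G (setD1C c.2 t s) (setD1C c.1 t s) -!mulrb; ring.
Qed.

Lemma cdiffK w c'' : cdiff (cdiff w) c'' = 0.
Proof.
rewrite /cdiff; under eq_bigr do rewrite mulr_suml.
rewrite exchange_big big1 // => c _.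
transitivity (w c * \sum_c' cell_bd c c' * cell_bd c' c'').
  by rewrite mulr_sumr; apply: eq_bigr => c' _; rewrite mulrA.
by rewrite cell_bd_bd mulr0.
Qed.

Lemma cdiffD v w c' : cdiff (fun c => v c + w c) c' = cdiff v c' + cdiff w c'.
Proof. by rewrite /cdiff -big_split; apply: eq_bigr => c _; rewrite mulrDl. Qed.

Lemma cdiffB v w c' : cdiff (fun c => v c - w c) c' = cdiff v c' - cdiff w c'.
Proof. by rewrite /cdiff -sumrB; apply: eq_bigr => c _; rewrite mulrBl. Qed.

Lemma cell_bd_neq0 c c' : cell_bd c c' != 0 ->
  exists2 t, t \in c.2 & c' = (c.1, c.2 :\ t) \/ c' = (c.1 :\ t, c.2 :\ t).
Proof.
move=> nz; case: (pickP [pred t in c.2 | (c' == (c.1, c.2 :\ t)) ||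
                                         (c' == (c.1 :\ t, c.2 :\ t))]).
  by move=> t /andP[tT /orP[] /eqP]; exists t => //; [left | right].
move=> no_face; move: nz; rewrite /cell_bd big1 ?eqxx // => t tT.
move: (no_face t); rewrite /= tT /= => /norP[/negbTE -> /negbTE ->].
by rewrite subrr mulr0.
Qed.

Lemma cell_bd_top A T T' : T \subset A -> cell_bd (A, T) (A, T') = koszul_bd y T T'.
Proof.
move=> sub; apply: eq_bigr => t tT /=; rewrite !xpair_eqE eqxx /=.
suff /negbTE -> : A != A :\ t by rewrite subr0.
by apply: contraTneq (subsetP sub t tT) => ->; rewrite setD11.
Qed.

Variable F : {set {set P}}.
Hypothesis F_setI : setI_closed F.
Implicit Type I : {set {set P}}.

Definition removable A := [set t in A | A :\ t \in F].

Definition cells I k :=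
  [set c : cell | [&& c.1 \in I, c.2 \subset removable c.1 & #|c.2| == k]].

Definition down_closed I :=
  I \subset F /\ forall A B, A \in I -> B \in F -> B \subset A -> B \in I.

Definition supported (S : {set cell}) v := forall c, c \notin S -> v c = 0.

Lemma removable_sub A : removable A \subset A.
Proof. by apply/subsetP => t; rewrite inE => /andP[]. Qed.

Lemma cells_face I k c c' : down_closed I -> c \in cells I k.+1 ->
  cell_bd c c' != 0 -> c' \in cells I k.
Proof.
case: c => A T [IF I_down]; rewrite inE /= => /and3P[AI subT /eqP cT].
case/cell_bd_neq0 => t /= tT [->|->]; rewrite inE /=.
  rewrite AI (subset_trans (subD1set T t) subT) /=.
  by move: cT; rewrite (cardsD1 t) tT add1n => -[->].
have := subsetP subT t tT; rewrite inE => /andP[tA AtF].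
rewrite (I_down A) ?subD1set //=; apply/andP; split; last first.
  by move: cT; rewrite (cardsD1 t) tT add1n => -[->].
apply/subsetP => s; rewrite in_setD1 => /andP[nst sT].
have := subsetP subT s sT; rewrite !inE nst => /andP[-> AsF] /=.
have -> : A :\ t :\ s = (A :\ t) :&: (A :\ s).
  by apply/setP => r; rewrite !inE; case: (r == s); case: (r == t); case: (r \in A).
by apply: F_setI => //; apply: (subsetP IF).
Qed.

Lemma cdiff_supported I k w : down_closed I -> supported (cells I k.+1) w ->
  supported (cells I k) (cdiff w).
Proof.
move=> dI w_supp c' c'_out; apply: big1 => c _.
have [c_in|c_out] := boolP (c \in cells I k.+1); last by rewrite w_supp // mul0r.
have [->|nz] := eqVneq (cell_bd c c') 0; first by rewrite mulr0.
by move: c'_out; rewrite (cells_face dI c_in nz).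
Qed.

Definition cell_lift A (z : {set P} -> R) c := if c.1 == A then z c.2 else 0.

Lemma cell_lift_supported I A k z : A \in I -> kchain (removable A) k z ->
  supported (cells I k) (cell_lift A z).
Proof.
move=> AI z_chain [B T]; rewrite /cell_lift /=; case: eqP => // ->.
by rewrite inE /= AI; apply: z_chain.
Qed.

(* Only the cells over a maximal [A] can have [A] as first component of a face. *)
Lemma cdiff_max I A k v T' : maxset (mem I) A -> supported (cells I k) v ->
  cdiff v (A, T') = kdiff y (fun T => v (A, T)) T'.
Proof.
move=> /maxsetP[AI A_max] v_supp.
rewrite /cdiff sum_cell (bigD1 A) //= [X in _ + X]big1 ?addr0.
  apply: eq_bigr => T _.
  have [cT|c_out] := boolP ((A, T) \in cells I k); last by rewrite v_supp // !mul0r.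
  move: cT; rewrite inE /= => /and3P[_ subT _].
  by rewrite cell_bd_top // (subset_trans subT) ?removable_sub.
move=> B nBA; apply: big1 => T _.
have [cT|c_out] := boolP ((B, T) \in cells I k); last by rewrite v_supp // mul0r.
have [->|/cell_bd_neq0[t _ /= [[eB _]|[eB _]]]] := eqVneq (cell_bd (B, T) (A, T')) 0.
- by rewrite mulr0.
- by rewrite eB eqxx in nBA.
- move: cT; rewrite inE /= => /and3P[BI _ _].
  by rewrite (A_max B) ?eqxx // in nBA; rewrite eB subD1set.
Qed.

Lemma cdiff_lift I A k z T' : maxset (mem I) A -> kchain (removable A) k z ->
  cdiff (cell_lift A z) (A, T') = kdiff y z T'.
Proof.
move=> A_max z_chain.
rewrite (cdiff_max _ A_max (cell_lift_supported (maxsetp A_max) z_chain)).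
by apply: eq_bigr => T _; rewrite /cell_lift eqxx.
Qed.

Lemma down_closedD1 I A : down_closed I -> maxset (mem I) A -> down_closed (I :\ A).
Proof.
move=> [IF I_down] /maxsetP[AI A_max]; split; first exact: subset_trans (subD1set I A) IF.
move=> A0 B; rewrite !inE => /andP[nA0 A0I] BF sub; rewrite (I_down A0) // andbT.
by apply: contraNneq nA0 => eB; rewrite (A_max A0) // -eB.
Qed.

Lemma down_closed_ind (Q : {set {set P}} -> Prop) : Q set0 ->
  (forall I A, down_closed I -> maxset (mem I) A -> Q (I :\ A) -> Q I) ->
  forall I, down_closed I -> Q I.
Proof.
move=> Q0 QD1 I; have [n] := ubnP #|I|; elim: n I => // n IHn I ltIn dI.
have [->//|[A0 A0I]] := set_0Vmem I.
have [A A_max _] := @maxset_exists _ (mem I) A0 A0I.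
apply: (QD1 _ _ dI A_max); apply: IHn (down_closedD1 dI A_max).
have AI : A \in I := maxsetp A_max.
by move: ltIn; rewrite (cardsD1 A) AI add1n ltnS.
Qed.

Lemma supported_cells0 k v : supported (cells set0 k) v -> v =1 (fun=> 0).
Proof. by move=> v_supp c; apply: v_supp; rewrite inE in_set0. Qed.

Lemma cellsD1_sub I A k : cells (I :\ A) k \subset cells I k.
Proof. by apply/subsetP => c; rewrite !inE -!andbA => /and4P[_ -> -> ->]. Qed.

Lemma supported_cellsD1 I A k w :
  supported (cells (I :\ A) k) w -> supported (cells I k) w.
Proof.
move=> w_supp c c_out; apply: w_supp; apply: contra c_out.
exact: (subsetP (cellsD1_sub I A k)).
Qed.

Lemma supported_peel I A k v w : down_closed I -> maxset (mem I) A ->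
  supported (cells I k) v -> supported (cells I k.+1) w ->
  (forall T, (A, T) \in cells I k -> v (A, T) = cdiff w (A, T)) ->
  supported (cells (I :\ A) k) (fun c => v c - cdiff w c).
Proof.
move=> dI A_max v_supp w_supp vw c c_out.
have [c_in|c_out'] := boolP (c \in cells I k); last first.
  by rewrite v_supp // (cdiff_supported dI w_supp) // subrr.
case: c c_in c_out => B T c_in c_out; have [eBA|nBA] := eqVneq B A.
  by rewrite eBA vw ?subrr // -eBA.
by move: c_in c_out; rewrite !inE /= nBA => ->.
Qed.

Lemma cells_exact (yreg : yregular y) I : down_closed I -> forall k v,
  supported (cells I k.+1) v -> (forall c', c' \in cells I k -> cdiff v c' = 0) ->
  exists2 w, supported (cells I k.+2) w & forall c', v c' = cdiff w c'.
Proof.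
elim/down_closed_ind => {I} [k v /supported_cells0 v0 _ |
                             I A dI A_max IH k v v_supp v_cycle].
  by exists (fun=> 0) => // c'; rewrite v0 /cdiff big1 // => c _; rewrite mul0r.
have AI : A \in I := maxsetp A_max.
have zA_chain : kchain (removable A) k.+1 (fun T => v (A, T)).
  by move=> T nT; apply: v_supp; rewrite inE /= AI.
have zA_cycle T' : T' \subset removable A -> #|T'| = k ->
    kdiff y (fun T => v (A, T)) T' = 0.
  move=> sub cT'; rewrite -(cdiff_max _ A_max v_supp) v_cycle //.
  by rewrite inE /= AI sub cT' eqxx.
have [wA wA_chain v_wA] := koszul_exact yreg zA_chain zA_cycle.
have lift_supp := cell_lift_supported AI wA_chain.
pose v' c := v c - cdiff (cell_lift A wA) c.
have v'_supp : supported (cells (I :\ A) k.+1) v'.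
  apply: supported_peel => // T; rewrite inE /= => /and3P[_ sub /eqP cT].
  by rewrite (cdiff_lift _ A_max wA_chain) -v_wA.
have v'_cycle c' : c' \in cells (I :\ A) k -> cdiff v' c' = 0.
  move=> c'_in; rewrite cdiffB cdiffK v_cycle ?subr0 //.
  exact: (subsetP (cellsD1_sub I A k)).
have [w' w'_supp v_w'] := IH k v' v'_supp v'_cycle.
exists (fun c => cell_lift A wA c + w' c).
  by move=> c c_out; rewrite lift_supp // (supported_cellsD1 w'_supp) ?add0r.
by move=> c'; rewrite cdiffD -v_w' addrC subrK.
Qed.

Variable u : {set P} -> R.
Hypothesis u_xy : forall A t, t \in A -> y t * u A = x t * u (A :\ t).

Definition augment v := \sum_c v c * u c.1.

Lemma augment_cdiff I k w : supported (cells I k) w -> augment (cdiff w) = 0.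
Proof.
move=> w_supp; rewrite /augment /cdiff; under eq_bigr do rewrite mulr_suml.
rewrite exchange_big big1 // => c _.
have [c_in|c_out] := boolP (c \in cells I k); last first.
  by apply: big1 => c' _; rewrite w_supp // !mul0r.
transitivity (w c * \sum_c' cell_bd c c' * u c'.1).
  by rewrite mulr_sumr; apply: eq_bigr => c' _; rewrite mulrA.
rewrite sum_cell_bd big1 ?mulr0 // => t tT /=.
move: c_in; rewrite inE => /and3P[_ sub _].
by rewrite u_xy ?subrr ?mulr0 // (subsetP (removable_sub _)) // (subsetP sub).
Qed.

Lemma augmentB v w : augment (fun c => v c - w c) = augment v - augment w.
Proof. by rewrite /augment -sumrB; apply: eq_bigr => c _; rewrite mulrBl. Qed.

Lemma augment_cells0 I v : supported (cells I 0) v ->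
  augment v = \sum_(B in I) v (B, set0) * u B.
Proof.
move=> v_supp; rewrite /augment sum_cell [RHS]big_mkcond /=; apply: eq_bigr => B _.
rewrite (bigD1 set0) //= big1 ?addr0 => [|T nT].
  by case: ifP => // BI; rewrite v_supp ?mul0r // inE /= BI.
by rewrite v_supp ?mul0r // inE /= cards_eq0 (negbTE nT) !andbF.
Qed.

Definition colon_removable := forall I A, down_closed I -> maxset (mem I) A ->
  forall a, (exists c : {set P} -> R, a * u A = \sum_(B in I :\ A) c B * u B) ->
  in_yideal y (removable A) a.

Lemma cells_exact_augment (colon : colon_removable) I : down_closed I -> forall v,
  supported (cells I 0) v -> augment v = 0 ->
  exists2 w, supported (cells I 1) w & forall c', v c' = cdiff w c'.
Proof.
elim/down_closed_ind => {I} [v /supported_cells0 v0 _ |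
                             I A dI A_max IH v v_supp v_aug].
  by exists (fun=> 0) => // c'; rewrite v0 /cdiff big1 // => c _; rewrite mul0r.
have AI : A \in I := maxsetp A_max.
have [ct v_ct] : in_yideal y (removable A) (v (A, set0)).
  apply: (colon I A dI A_max); exists (fun B => - v (B, set0)).
  move: v_aug; rewrite (augment_cells0 v_supp) (bigD1 A) //= => /eqP.
  rewrite addr_eq0 => /eqP ->; rewrite -sumrN.
  by apply: eq_big => [B|B _]; rewrite ?mulNr // in_setD1 andbC.
have ct_chain : kchain (removable A) 1 (singleton_chain (removable A) ct).
  exact: singleton_chainP.
pose wA := cell_lift A (singleton_chain (removable A) ct).
have wA_supp : supported (cells I 1) wA := cell_lift_supported AI ct_chain.
pose v' c := v c - cdiff wA c.
have v'_supp : supported (cells (I :\ A) 0) v'.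
  apply: supported_peel => // T; rewrite inE /= => /and3P[_ _ /eqP/cards0_eq ->].
  by rewrite (cdiff_lift _ A_max ct_chain) kdiff_singleton_chain.
have v'_aug : augment v' = 0 by rewrite augmentB v_aug (augment_cdiff wA_supp) subr0.
have [w' w'_supp v_w'] := IH v' v'_supp v'_aug.
exists (fun c => wA c + w' c).
  by move=> c c_out; rewrite wA_supp // (supported_cellsD1 w'_supp) ?add0r.
by move=> c'; rewrite cdiffD -v_w' addrC subrK.
Qed.

End CellComplex.

Section VariableIdeals.
Variables (K : fieldType) (N : nat).
Local Notation S := {mpoly K[N]}.

Lemma mcoeffMX_nle (p : S) (m0 m : 'X_{1..N}) :
  ~~ (m0 <= m)%MM -> (p * 'X_[m0])@_m = 0.
Proof.
move=> nle; apply/eqP; rewrite mcoeff_eq0; apply: contra nle.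
by rewrite (perm_mem (msuppMX p m0)) => /mapP[m' _ ->]; apply: lem_addr.
Qed.

Lemma msupp_sumMX (J : finType) (A : {pred J}) (c : J -> S) (g : J -> 'X_{1..N}) m :
  m \in msupp (\sum_(j in A) c j * 'X_[g j]) -> exists2 j, j \in A & (g j <= m)%MM.
Proof.
move=> m_supp; case: (pickP [pred j in A | g j <= m]%MM) => [j /andP[jA le]|none].
  by exists j.
move: m_supp; rewrite mcoeff_msupp raddf_sum /= big1 ?eqxx // => j jA.
by apply: mcoeffMX_nle; move: (none j); rewrite /= jA => /negbT.
Qed.

Lemma in_yideal_vars (P : finType) (vi : P -> 'I_N) (M : {set P}) (f : S) :
  (forall m, m \in msupp f -> exists2 t, t \in M & (0 < m (vi t))%N) ->
  in_yideal (fun t => 'X_(vi t)) M f.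
Proof.
move=> f_supp; rewrite [f]mpolyE big_seq.
apply: (big_ind (in_yideal (fun t => 'X_(vi t)) M)) => [|g1 g2 [c1 ->] [c2 ->]|m m_supp].
- by exists (fun=> 0); rewrite big1 // => t _; rewrite mul0r.
- exists (fun t => c1 t + c2 t).
  by rewrite -big_split; apply: eq_bigr => t _; rewrite mulrDl.
have [t tM lt] := f_supp m m_supp.
exists (fun s => if s == t then f@_m *: 'X_[m - U_(vi t)] else 0).
rewrite (bigD1 t) //= eqxx big1 ?addr0 => [|s /andP[_ /negbTE ->]]; last by rewrite mul0r.
rewrite -scalerAl -mpolyXD submK //; apply/mnm_lepP => i; rewrite mnm1E.
by case: eqP => [<-|].
Qed.

Lemma yregular_vars (P : finType) (vi : P -> 'I_N) : injective vi ->
  yregular (fun t => 'X_(vi t) : S).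
Proof.
move=> vi_inj M m b mM [c bc]; apply: in_yideal_vars => k k_supp.
have : (U_(vi m) + k)%MM \in msupp (\sum_(t in M) c t * 'X_[U_(vi t)]).
  by rewrite -bc mcoeff_msupp mulrC mcoeffMX -mcoeff_msupp.
case/msupp_sumMX => t tM /mnm_lepP /(_ (vi t)); rewrite mnmDE !mnm1E eqxx.
rewrite (inj_eq vi_inj); case: eqP => [mt|_]; first by rewrite mt tM in mM.
by exists t.
Qed.

End VariableIdeals.

Section HibiMonomials.
Variables (K : fieldType) (N : nat) (P : finType) (xi yi : P -> 'I_N).
Hypotheses (yi_inj : injective yi) (xi_yi : forall p q, xi p != yi q).
Local Notation S := {mpoly K[N]}.
Implicit Type A : {set P}.

Definition xvar p : S := 'X_(xi p).
Definition yvar p : S := 'X_(yi p).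

Definition hibi_mon A : S := \prod_(p in A) xvar p * \prod_(p in ~: A) yvar p.

Definition hibi_exp A : 'X_{1..N} :=
  (\sum_(p in A) U_(xi p) + \sum_(p in ~: A) U_(yi p))%MM.

Lemma hibi_monE A : hibi_mon A = 'X_[hibi_exp A].
Proof. by rewrite /hibi_mon /hibi_exp mpolyXD /xvar /yvar !mprodXE. Qed.

Lemma hibi_exp_yi A t : hibi_exp A (yi t) = (t \notin A).
Proof.
rewrite /hibi_exp mnmDE !mnm_sumE big1 ?add0n => [|p _]; last first.
  by rewrite mnm1E (negbTE (xi_yi _ _)).
rewrite (eq_bigr (fun p => nat_of_bool (p == t))) => [|p _]; last first.
  by rewrite mnm1E (inj_eq yi_inj).
case tA: (t \in A) => /=.
  by rewrite big1 // => p; rewrite inE; case: eqP => // ->; rewrite tA.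
by rewrite (bigD1 t) ?inE ?tA //= eqxx big1 // => p /andP[_ /negbTE ->].
Qed.

Lemma hibi_mon_xy A t : t \in A -> yvar t * hibi_mon A = xvar t * hibi_mon (A :\ t).
Proof.
move=> tA; rewrite /hibi_mon (bigD1 t tA) /= [X in _ = _ * (_ * X)](bigD1 t) /=.
  2: by rewrite !inE eqxx.
have -> : \prod_(p in A | p != t) xvar p = \prod_(p in A :\ t) xvar p.
  by apply: eq_bigl => p; rewrite !inE andbC.
have -> : \prod_(p in ~: (A :\ t) | p != t) yvar p = \prod_(p in ~: A) yvar p.
  apply: eq_bigl => p; rewrite !inE negb_and negbK.
  by case: eqP => [->|] /=; rewrite ?tA ?andbF ?andbT.
ring.
Qed.

Lemma hibi_mon_homog A : hibi_mon A \is #|P|.-homog.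
Proof.
rewrite hibi_monE dhomogX /= /hibi_exp mdegD !mdeg_sum.
under eq_bigr do rewrite mdeg1; under [X in (_ + X)%N]eq_bigr do rewrite mdeg1.
by rewrite !sum1_card cardsC.
Qed.

(* A monomial of [(u_B : B) : u_A] is divisible by [y_t] for the [t] that the
   exchange property provides between [A] and [A :&: B]. *)
Lemma hibi_colon F : setI_closed F -> exchange F -> colon_removable yvar F hibi_mon.
Proof.
move=> F_setI F_exch I A [IF _] /maxsetP[AI A_max] a [c ac].
apply: in_yideal_vars => k k_supp.
have : (hibi_exp A + k)%MM \in msupp (\sum_(B in I :\ A) c B * 'X_[hibi_exp B]).
  under eq_bigr do rewrite -hibi_monE.
  by rewrite -ac hibi_monE mcoeff_msupp mcoeffMX -mcoeff_msupp.
case/msupp_sumMX => B; rewrite in_setD1 => /andP[nBA BI] le_AkB.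
have [AF BF] := (subsetP IF A AI, subsetP IF B BI).
have AB_proper : A :&: B \proper A.
  rewrite properEneq subsetIl andbT; apply: contraNneq nBA => AB_A.
  by rewrite (A_max B) // -AB_A subsetIr.
have [t] := F_exch _ _ AF (F_setI _ _ AF BF) AB_proper.
rewrite !inE negb_and => /andP[/orP[ntA|ntB] tA] AtF; first by rewrite tA in ntA.
exists t; first by rewrite inE tA AtF.
by move/mnm_lepP: le_AkB => /(_ (yi t)); rewrite mnmDE !hibi_exp_yi tA ntB.
Qed.

End HibiMonomials.

Section HibiResolution.
Variables (K : fieldType) (N : nat) (P : finType) (xi yi : P -> 'I_N).
Hypotheses (yi_inj : injective yi) (xi_yi : forall p q, xi p != yi q).
Variable F : {set {set P}}.
Hypotheses (F_setI : setI_closed F) (F_exch : exchange F).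
Variable I : {set {set P}}.
Hypothesis I_down : down_closed F I.
Local Notation S := {mpoly K[N]}.
Local Notation x := (xvar K xi).
Local Notation y := (yvar K yi).
Local Notation u := (hibi_mon K xi yi).
Local Notation cells i := (cells F I i).
Variable J : S -> Prop.
Hypothesis J_gen : forall f, J f <-> exists c : {set P} -> S, f = \sum_(A in I) c A * u A.

Let u_xy : forall (A : {set P}) t, t \in A -> y t * u A = x t * u (A :\ t) :=
  @hibi_mon_xy K N P xi yi.
Let yreg : yregular y := yregular_vars yi_inj.
Let colon : colon_removable y F u := hibi_colon yi_inj xi_yi F_setI F_exch.

(* The free module of homological degree [i] has basis [cells i], enumerated by
   [cell_of]; [chain_of] reads a row vector as a function on cells. *)
Definition ncells i := #|cells i|.
Definition cell_of i (k : 'I_(ncells i)) : cell P := enum_val k.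

Definition chain_of i (v : 'rV[S]_(ncells i)) (c : cell P) : S :=
  \sum_k (if cell_of k == c then v 0 k else 0).

Lemma cell_ofP i k : @cell_of i k \in cells i.
Proof. exact: enum_valP. Qed.

Lemma chain_of_cell i v k : @chain_of i v (cell_of k) = v 0 k.
Proof.
rewrite /chain_of (bigD1 k) //= eqxx big1 ?addr0 // => k' nk'.
by case: eqP => // /enum_val_inj ek'; rewrite ek' eqxx in nk'.
Qed.

Lemma chain_of_supported i v : supported (cells i) (@chain_of i v).
Proof.
move=> c c_out; apply: big1 => k _; case: eqP => // ek.
by move: c_out; rewrite -ek cell_ofP.
Qed.

Lemma chain_of_row i (f : cell P -> S) : supported (cells i) f ->
  forall c, @chain_of i (\row_k f (cell_of k)) c = f c.
Proof.
move=> f_supp c; have [c_in|c_out] := boolP (c \in cells i); last first.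
  by rewrite chain_of_supported ?f_supp.
by rewrite -(enum_rankK_in c_in c_in) chain_of_cell mxE.
Qed.

Lemma chain_of0 i c : @chain_of i 0 c = 0.
Proof. by apply: big1 => k _; rewrite mxE; case: ifP. Qed.

Lemma chain_of_inj i (v w : 'rV[S]_(ncells i)) : chain_of v =1 chain_of w -> v = w.
Proof. by move=> vw; apply/rowP => k; rewrite -!chain_of_cell vw. Qed.

Lemma sum_row_chain i (v : 'rV[S]_(ncells i)) (g : cell P -> S) :
  \sum_k v 0 k * g (cell_of k) = \sum_c chain_of v c * g c.
Proof.
rewrite /chain_of; under [RHS]eq_bigr do rewrite mulr_suml.
rewrite exchange_big; apply: eq_bigr => k _.
by rewrite -(sum_delta_mul (cell_of k) (v 0 k) g); apply: eq_bigr => c _; rewrite eq_sym.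
Qed.

Definition aug_mx : 'M[S]_(ncells 0, 1) := \matrix_(k, j) u (cell_of k).1.
Definition diff_mx i : 'M[S]_(ncells i.+1, ncells i) :=
  \matrix_(k, l) cell_bd x y (cell_of k) (cell_of l).

Lemma chain_of_mul_diff i (w : 'rV[S]_(ncells i.+1)) c :
  chain_of (w *m diff_mx i) c = cdiff x y (chain_of w) c.
Proof.
have [c_in|c_out] := boolP (c \in cells i); last first.
  have w_supp := @chain_of_supported i.+1 w.
  by rewrite chain_of_supported // (cdiff_supported _ _ F_setI I_down w_supp).
rewrite -(enum_rankK_in c_in c_in) chain_of_cell mxE /cdiff -sum_row_chain.
by apply: eq_bigr => k _; rewrite mxE.
Qed.

Lemma mul_aug_mx (v : 'rV[S]_(ncells 0)) :
  (v *m aug_mx) 0 0 = augment u (chain_of v).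
Proof. by rewrite mxE /augment -sum_row_chain; apply: eq_bigr => k _; rewrite mxE. Qed.

Lemma aug_mx_onto f : J f <-> exists v : 'rV[S]_(ncells 0), f = (v *m aug_mx) 0 0.
Proof.
rewrite J_gen; split => [[c ->]|[v ->]]; last first.
  exists (fun B => chain_of v (B, set0)).
  by rewrite mul_aug_mx (augment_cells0 _ (@chain_of_supported 0 v)).
pose f0 c0 : S := if c0 \in cells 0 then c c0.1 else 0.
have f0_supp : supported (cells 0) f0 by move=> c0 /negbTE; rewrite /f0 => ->.
exists (\row_k f0 (cell_of k)).
rewrite mul_aug_mx (augment_cells0 _ (@chain_of_supported 0 _)).
by apply: eq_bigr => B BI; rewrite chain_of_row // /f0 inE /= BI sub0set cards0.
Qed.

Lemma aug_mx_exact (v : 'rV[S]_(ncells 0)) :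
  v *m aug_mx = 0 <-> exists w : 'rV[S]_(ncells 1), v = w *m diff_mx 0.
Proof.
split => [v0|[w ->]].
  have v_aug : augment u (chain_of v) = 0 by rewrite -mul_aug_mx v0 mxE.
  have v_supp := @chain_of_supported 0 v.
  have [w w_supp vw] := cells_exact_augment F_setI u_xy colon I_down v_supp v_aug.
  exists (\row_k w (cell_of k)); apply: chain_of_inj => c.
  by rewrite chain_of_mul_diff vw; apply: eq_bigr => c0 _; rewrite chain_of_row.
apply/matrixP => i j; rewrite !ord1 mul_aug_mx [RHS]mxE.
rewrite -(augment_cdiff u_xy (@chain_of_supported 1 w)).
by apply: eq_bigr => c _; rewrite chain_of_mul_diff.
Qed.

Lemma diff_mx_exact i (v : 'rV[S]_(ncells i.+1)) :
  v *m diff_mx i = 0 <-> exists w : 'rV[S]_(ncells i.+2), v = w *m diff_mx i.+1.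
Proof.
split => [v0|[w ->]]; last first.
  apply: chain_of_inj => c; rewrite chain_of0 chain_of_mul_diff.
  rewrite -(cdiffK x y (chain_of w) c); apply: eq_bigr => c' _.
  by rewrite chain_of_mul_diff.
have v_cycle c' : c' \in cells i -> cdiff x y (chain_of v) c' = 0.
  by move=> _; rewrite -chain_of_mul_diff v0 chain_of0.
have v_supp := @chain_of_supported i.+1 v.
have [w w_supp vw] := cells_exact F_setI yreg I_down v_supp v_cycle.
exists (\row_k w (cell_of k)); apply: chain_of_inj => c.
by rewrite chain_of_mul_diff vw; apply: eq_bigr => c0 _; rewrite chain_of_row.
Qed.

Lemma cell_bd_homog c c' : cell_bd x y c c' \is 1.-homog.
Proof.
have sign_homog n : (-1 : S) ^+ n \is 0.-homog.
  have m1 : (-1 : S) \is 0.-homog by rewrite rpredN dhomog1.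
  by move: (dhomogMn n m1); rewrite mul0n.
apply: rpred_sum => t _; rewrite -[1%N]add0n; apply: dhomogM; first exact: sign_homog.
by apply: rpredB; case: ifP => _; rewrite ?rpred0 // dhomogX /= mdeg1.
Qed.

Lemma cell_bd_mcoeff0 c c' : (cell_bd x y c c')@_0 = 0.
Proof.
rewrite raddf_sum /=; apply: big1 => t _; rewrite rmorphM /= mcoeffB.
by case: ifP => _; case: ifP => _;
  rewrite ?mcoeff0 ?mcoeffX ?mnm1_eq0 ?subrr ?subr0 ?sub0r ?oppr0 ?mulr0.
Qed.

Lemma hibi_linear_res : has_linear_min_res J.
Proof.
pose deg i (_ : 'I_(ncells i)) := (#|P| + i)%N.
have aug_homog k : homog_of (deg 0 k) (aug_mx k ord0).
  by rewrite /homog_of /aug_mx mxE /deg addn0 hibi_mon_homog.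
have diff_homog i k l : diff_mx i k l = 0 \/
    ((deg i l <= deg i.+1 k)%N /\ homog_of (deg i.+1 k - deg i l) (diff_mx i k l)).
  right; rewrite /deg addnS leqnSn subSn // subnn /diff_mx mxE.
  by split => //; apply: cell_bd_homog.
exists (GFR aug_homog diff_homog aug_mx_onto aug_mx_exact diff_mx_exact); split.
  by move=> i k l /=; rewrite /diff_mx mxE cell_bd_mcoeff0.
by exists #|P|.
Qed.

End HibiResolution.

Section JoinIrreducibles.
Context {disp : Order.disp_t} (L : finTBDistrLatticeType disp).
Local Open Scope order_scope.
Implicit Types (q r t w z : L).
Local Notation JIL := (JI L).

Definition down_card z : nat := #|[set w : L | w <= z]|.

Lemma down_card_lt z z' : z < z' -> (down_card z < down_card z')%N.
Proof.
move=> lt_zz'; apply: proper_card; apply/properP; split.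
  by apply/subsetP => w; rewrite !inE => /le_trans; apply; apply: ltW.
by exists z'; rewrite !inE ?lexx // lt_geF.
Qed.

Lemma lower_nb_exists w t : w < t -> exists c, lower_nb c t && (w <= c).
Proof.
move=> lt_wt; have wP : [pred z | (w <= z) && (z < t)] w by rewrite /= lexx lt_wt.
case: (arg_maxnP down_card wP) => c /= /andP[le_wc lt_ct] c_max.
exists c; rewrite le_wc andbT /lower_nb lt_ct; apply/forallP => r.
apply/negP => /andP[lt_cr lt_rt].
have := c_max r; rewrite /= (le_trans le_wc (ltW lt_cr)) lt_rt => /(_ isT).
by rewrite leqNgt down_card_lt.
Qed.

Lemma join_irr_lower_nb t : join_irr t ->
  exists c, lower_nb c t /\ forall w, w < t -> w <= c.
Proof.
case/cards1P => c c_unique.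
have nbE c' : lower_nb c' t = (c' == c).
  by rewrite -in_set1 -c_unique inE.
exists c; split; first by rewrite nbE.
by move=> w /lower_nb_exists[c' /andP[]]; rewrite nbE => /eqP ->.
Qed.

Lemma join_irr_neq0 t : join_irr t -> t != \bot.
Proof.
case/join_irr_lower_nb => c [/andP[lt_ct _] _].
by apply: contraTneq lt_ct => ->; rewrite ltx0.
Qed.

Lemma join_irr_leU t a b : join_irr t -> t <= a `|` b -> (t <= a) || (t <= b).
Proof.
move=> t_ji le_tab; apply/contraT; rewrite negb_or => /andP[nta ntb].
have [c [/andP[lt_ct _] below_c]] := join_irr_lower_nb t_ji.
have meet_lt d : ~~ (t <= d) -> t `&` d < t.
  by move=> ntd; rewrite lt_neqAle leIl andbT; apply: contra ntd => /eqP/meet_idPl.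
have : t <= c by rewrite -(meet_l le_tab) meetUr leUx !below_c ?meet_lt.
by rewrite lt_geF.
Qed.

Lemma join_irr_le_join (X : {set JIL}) t : join_irr t ->
  t <= \join_(s in X) val s -> exists2 s, s \in X & t <= val s.
Proof.
move=> t_ji; apply: (big_ind (fun z => t <= z -> exists2 s, s \in X & t <= val s)).
- by rewrite lex0 => /eqP t0; move: (join_irr_neq0 t_ji); rewrite t0 eqxx.
- by move=> z1 z2 IH1 IH2 /(join_irr_leU t_ji) /orP[/IH1|/IH2].
- by move=> s sX le_ts; exists s.
Qed.

Lemma join_irr_separates q r : ~~ (q <= r) ->
  exists p : JIL, (val p <= q) && ~~ (val p <= r).
Proof.
move=> nqr; have qP : [pred z | (z <= q) && ~~ (z <= r)] q by rewrite /= lexx nqr.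
case: (arg_minnP down_card qP) => p /= /andP[le_pq npr] p_min.
have below_r z : z < p -> z <= r.
  move=> lt_zp; apply: contraT => nzr.
  have := p_min z; rewrite /= (le_trans (ltW lt_zp) le_pq) nzr => /(_ isT).
  by rewrite leqNgt down_card_lt.
have [c1 /andP[c1_nb _]] : exists c, lower_nb c p && (\bot <= c).
  by apply: lower_nb_exists; rewrite lt0x; apply: contraNneq npr => ->; rewrite le0x.
suff p_ji : join_irr p by exists (exist _ p p_ji); rewrite /= le_pq.
apply/cards1P; exists c1; apply/setP => c2; rewrite !inE.
apply/idP/eqP => [c2_nb|->//]; apply/eqP/contraT => nc21.
move: (c1_nb) (c2_nb) => /andP[lt_c1p /forallP c1_max] /andP[lt_c2p /forallP c2_max].
(* Two distinct lower neighbours of the minimal [p] would join to [p], forcing [p <= r]. *)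
have lt_c1U : c1 < c1 `|` c2.
  rewrite lt_neqAle leUl andbT; apply/eqP => c1U.
  have lt_c21 : c2 < c1 by rewrite lt_neqAle nc21 c1U leUr.
  by have := c2_max c1; rewrite lt_c21 lt_c1p.
have c1Up : c1 `|` c2 = p.
  have : c1 `|` c2 <= p by rewrite leUx !ltW.
  rewrite le_eqVlt => /orP[/eqP //|lt_Up].
  by have := c1_max (c1 `|` c2); rewrite lt_c1U lt_Up.
by move: npr; rewrite -c1Up leUx !below_r.
Qed.

Definition ell q : {set JIL} := [set p : JIL | val p <= q].

Lemma ell_subsetE q r : (ell q \subset ell r) = (q <= r).
Proof.
apply/idP/idP => [sub_qr|le_qr].
  apply: contraT => /join_irr_separates[p /andP[le_pq npr]].
  by move: (subsetP sub_qr p); rewrite !inE le_pq (negbTE npr) => /(_ isT).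
by apply/subsetP => p; rewrite !inE => /le_trans; apply.
Qed.

Lemma ell_inj : injective ell.
Proof. by move=> q r e; apply: le_anti; rewrite -!ell_subsetE e subxx. Qed.

Lemma ellI q r : ell (q `&` r) = ell q :&: ell r.
Proof. by apply/setP => p; rewrite !inE lexI. Qed.

Lemma ellU q r : ell (q `|` r) = ell q :|: ell r.
Proof.
apply/setP => p; rewrite !inE; apply/idP/idP; first exact: join_irr_leU (valP p).
by case/orP => /le_trans; apply; rewrite ?leUl ?leUr.
Qed.

Lemma ell_join_down (X : {set JIL}) :
  (forall p s : JIL, s \in X -> val p <= val s -> p \in X) ->
  ell (\join_(s in X) val s) = X.
Proof.
move=> X_down; apply/setP => p; rewrite inE; apply/idP/idP; last exact: joins_sup.
by case/(join_irr_le_join (valP p)) => s sX le_ps; apply: X_down sX le_ps.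
Qed.

Definition ell_family := [set ell z | z : L].
Definition coell_family := [set ~: ell z | z : L].

Lemma ell_family_setI : setI_closed ell_family.
Proof.
move=> _ _ /imsetP[q _ ->] /imsetP[r _ ->].
by rewrite -ellI; apply/imsetP; exists (q `&` r).
Qed.

Lemma coell_family_setI : setI_closed coell_family.
Proof.
move=> _ _ /imsetP[q _ ->] /imsetP[r _ ->].
by rewrite -setCU -ellU; apply/imsetP; exists (q `|` r).
Qed.

(* Remove a maximal element of [ell q :\: ell r]. *)
Lemma ell_family_exchange : exchange ell_family.
Proof.
move=> _ _ /imsetP[q _ ->] /imsetP[r _ ->] /properP[_ [t0 t0q t0r]].
have t0P : [pred t | t \in ell q :\: ell r] t0 by rewrite /= inE t0q t0r.
case: (arg_maxnP (fun t : JIL => down_card (val t)) t0P) => t /= t_in t_max.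
exists t => //; apply/imsetP; exists (\join_(s in ell q :\ t) val s) => //.
apply/esym/ell_join_down => p s; rewrite !inE => /andP[nst le_sq] le_ps.
rewrite (le_trans le_ps le_sq) andbT; apply/eqP => ept; subst p.
have lt_ts : val t < val s by rewrite lt_neqAle le_ps andbT (inj_eq val_inj) eq_sym.
move: t_in; rewrite !inE => /andP[ntr _].
have nsr : ~~ (val s <= r) by apply: contra ntr => /(le_trans le_ps).
have := t_max s; rewrite /= !inE nsr le_sq => /(_ isT).
by rewrite leqNgt down_card_lt.
Qed.

(* Add a minimal element of [ell r :\: ell q]. *)
Lemma coell_family_exchange : exchange coell_family.
Proof.
move=> _ _ /imsetP[q _ ->] /imsetP[r _ ->]; rewrite properC => /properP[_ [t0 t0r t0q]].
have t0P : [pred t | t \in ell r :\: ell q] t0 by rewrite /= inE t0q t0r.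
case: (arg_minnP (fun t : JIL => down_card (val t)) t0P) => t /= t_in t_min.
exists t; first by move: t_in; rewrite !inE negbK andbC.
apply/imsetP; exists (\join_(s in t |: ell q) val s) => //.
rewrite ell_join_down; first by apply/setP => p; rewrite !inE negb_or.
move=> p s; rewrite !inE => /orP[/eqP ->|le_sq] le_ps.
  2: by rewrite (le_trans le_ps le_sq) orbT.
case le_pq: (val p <= q); first by rewrite orbT.
move: t_in; rewrite !inE => /andP[_ le_tr].
have := t_min p; rewrite /= !inE le_pq (le_trans le_ps le_tr) => /(_ isT) le_card.
apply: contraT => npt; rewrite orbF in npt.
have lt_pt : val p < val t by rewrite lt_neqAle le_ps andbT (inj_eq val_inj).
by move: le_card; rewrite leqNgt down_card_lt.
Qed.

End JoinIrreducibles.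

Section HibiIdeals.
Context (K : fieldType) {disp : Order.disp_t} (L : finTBDistrLatticeType disp).
Local Notation n := (nJI L).

Definition xidx (p : JI L) : 'I_(n + n) := lshift n (enum_rank p).
Definition yidx (p : JI L) : 'I_(n + n) := rshift n (enum_rank p).

Lemma xidx_inj : injective xidx.
Proof. by move=> p q /lshift_inj /enum_rank_inj. Qed.

Lemma yidx_inj : injective yidx.
Proof. by move=> p q /rshift_inj /enum_rank_inj. Qed.

Lemma xidx_neq_yidx p q : xidx p != yidx q.
Proof. by rewrite /xidx /yidx eq_lrshift. Qed.

Lemma yidx_neq_xidx p q : yidx p != xidx q.
Proof. by rewrite /xidx /yidx eq_rlshift. Qed.

Lemma hibi_mon_ell q : hibi_mon K xidx yidx (ell q) = u_mon K q.
Proof. by rewrite /hibi_mon /u_mon; congr (_ * _); apply: eq_bigl => p; rewrite !inE. Qed.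

Lemma hibi_mon_coell q : hibi_mon K yidx xidx (~: ell q) = u_mon K q.
Proof.
rewrite /hibi_mon /u_mon setCK mulrC.
by congr (_ * _); apply: eq_bigl => p; rewrite !inE.
Qed.

Lemma linear_res_of_family (g : L -> {set JI L}) (xi yi : JI L -> 'I_(n + n))
    (F : {set {set JI L}}) (I : {set L}) :
  injective g -> injective yi -> (forall p q, xi p != yi q) ->
  (forall q, hibi_mon K xi yi (g q) = u_mon K q) ->
  setI_closed F -> exchange F -> down_closed F (g @: I) ->
  has_linear_min_res (in_H K I).
Proof.
move=> g_inj yi_inj xi_yi g_u F_setI F_exch I_down.
apply: (hibi_linear_res yi_inj xi_yi F_setI F_exch I_down) => f.
have sum_g (c : {set JI L} -> {mpoly K[n + n]}) :
    \sum_(A in g @: I) c A * hibi_mon K xi yi A = \sum_(q in I) c (g q) * u_mon K q.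
  by rewrite big_imset /= => [|q1 q2 _ _ /g_inj //]; apply: eq_bigr => q _; rewrite g_u.
split=> [[c ->]|[c ->]]; last by exists (fun q => c (g q)); rewrite sum_g.
exists (fun A => \sum_(q | g q == A) c q); rewrite sum_g; apply: eq_bigr => q _.
by rewrite (big_pred1 q) // => q'; rewrite /= (inj_eq g_inj).
Qed.

Lemma ideal_linear_res (I : {set L}) : poset_ideal I -> has_linear_min_res (in_H K I).
Proof.
move=> I_ideal; apply: (linear_res_of_family (@ell_inj _ L) yidx_inj xidx_neq_yidx
  hibi_mon_ell (@ell_family_setI _ L) (@ell_family_exchange _ L)); split.
  by apply/subsetP => _ /imsetP[q _ ->]; apply/imsetP; exists q.
move=> _ _ /imsetP[q qI ->] /imsetP[r _ ->]; rewrite ell_subsetE => le_rq.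
by apply/imsetP; exists r => //; apply: I_ideal le_rq qI.
Qed.

Lemma coideal_linear_res (I : {set L}) : poset_coideal I -> has_linear_min_res (in_H K I).
Proof.
move=> I_coideal; have coell_inj : injective (fun q : L => ~: ell q).
  by move=> q r /setC_inj /(@ell_inj _ L).
apply: (linear_res_of_family coell_inj xidx_inj yidx_neq_xidx hibi_mon_coell
  (@coell_family_setI _ L) (@coell_family_exchange _ L)); split.
  by apply/subsetP => _ /imsetP[q _ ->]; apply/imsetP; exists q.
move=> _ _ /imsetP[q qI ->] /imsetP[r _ ->]; rewrite setCS ell_subsetE => le_qr.
by apply/imsetP; exists r => //; apply: I_coideal le_qr qI.
Qed.

End HibiIdeals.

Theorem corollary3p2 (K : fieldType) (disp : Order.disp_t)
  (L : finTBDistrLatticeType disp) (I : {set L}) :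
  poset_ideal I \/ poset_coideal I ->
  has_linear_min_res (in_H K I).
Proof. by case=> [/ideal_linear_res|/coideal_linear_res]. Qed.
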